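(* Let $f:[0,\infty)\to[0,\infty)$ be continuously differentiable with $f>0$ on $[t_0,\infty)$ for some $t_0\ge0$ and $f\in C^2([t_0,\infty))$, let $g=\log f$ on $[t_0,\infty)$, and assume condition (H1) of the context with the pair $(q,p)$. Then for every $\varepsilon\in(0,q)$ there exists $t_\varepsilon\ge t_0$ such that $$\left(\frac{g(t)}{g(s)}\right)^{\frac1{q+\varepsilon}}\le\frac{g'(t)}{g'(s)}\le\left(\frac{g(t)}{g(s)}\right)^{\frac1{q-\varepsilon}}$$ for all $t>s\ge t_\varepsilon$.
   Context: Condition (H1): (i) $g'(t)>0$ and $g''(t)>0$ for all $t\ge t_0$, and there is a pair $(q,p)$ with either $q=1$ and $p\in(0,\infty]$, or $q\in(1,\infty)$ and $p\in(0,\infty)$, such that $\lim_{t\to\infty}\frac{g'(t)^2}{g(t)g''(t)}=q$ and $\lim_{t\to\infty}\frac{tg'(t)}{g(t)}=p$; (ii) if $q=1$, then $tg'(t)/g(t)$ is nondecreasing on $[t_0,\infty)$ and there exist $k\in\mathbb{N}$ and $\hat g\in C^2([t_0,\infty))$ with $f=\exp_k\circ\hat g$ and $\hat g'/\hat g$ nonincreasing on $[t_0,\infty)$ ($\exp_1=\exp$, $\exp_k=\exp_{k-1}\circ\exp$). *)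

From Stdlib Require Import Reals.
From Coquelicot Require Import Coquelicot.
Open Scope R_scope.

Definition cont_on_from (a : R) (h : R -> R) : Prop :=
  forall x, a <= x ->
    filterlim h (within (fun y => a <= y) (locally x)) (locally (h x)).

Definition deriv_on_from (a : R) (F F' : R -> R) : Prop :=
  forall x, a <= x ->
    filterlim (fun y => (F y - F x) / (y - x))
      (within (fun y => a <= y /\ y <> x) (locally x)) (locally (F' x)).

Definition exp_k (k : nat) (x : R) : R := Nat.iter k exp x.

(** For large [t] the quotient [g'^2 / (g g'')] stays within [eps] of [q], and
    it is exactly the factor deciding the sign of
    [(ln g - c ln g')' = (g''/g') (g'^2/(g g'') - c)].  Hence [ln g - (q+eps) ln g']
    decreases and [ln g - (q-eps) ln g'] increases eventually; exponentiating
    these two monotonicity statements between [s] and [t] gives the bounds. *)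

From Stdlib Require Import Reals Lra.
From Coquelicot Require Import Coquelicot.
Open Scope R_scope.

Lemma derivable_pt_lim_of_deriv_on_from a F F' x :
  deriv_on_from a F F' -> a < x -> derivable_pt_lim F x (F' x).
Proof.
  intros HF Hax eps Heps.
  destruct (HF x (Rlt_le _ _ Hax) (fun z => Rabs (z - F' x) < eps)) as [d Hd].
  { exists (mkposreal eps Heps). now intros z Hz. }
  assert (Hdelta : 0 < Rmin d (x - a)) by (apply Rmin_pos; [apply cond_pos | lra]).
  exists (mkposreal _ Hdelta). intros h Hh0 Hh. simpl in Hh.
  assert (Hhd : Rabs h < d) by (eapply Rlt_le_trans; [exact Hh | apply Rmin_l]).
  assert (Hha : Rabs h < x - a) by (eapply Rlt_le_trans; [exact Hh | apply Rmin_r]).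
  apply Rabs_def2 in Hha.
  replace h with (x + h - x) at 2 by ring.
  apply Hd.
  - unfold ball; simpl. unfold AbsRing_ball, abs, minus, plus, opp; simpl.
    now replace (x + h + - x) with h by ring.
  - split; [lra | intro E; apply Hh0; lra].
Qed.

Lemma Rdiv_pos_denom_pos n d : 0 < n -> 0 < n / d -> 0 < d.
Proof.
  intros Hn Hnd.
  destruct (Rtotal_order d 0) as [Hd | [Hd | Hd]]; [| |exact Hd].
  - assert (n / d < 0) by (apply Rdiv_pos_neg; assumption). lra.
  - rewrite Hd in Hnd. unfold Rdiv in Hnd. rewrite Rinv_0, Rmult_0_r in Hnd. lra.
Qed.

Lemma Rpower_inv_lt u v c :
  0 < u -> 0 < v -> 0 < c -> ln u < c * ln v -> Rpower u (1 / c) < v.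
Proof.
  intros Hu Hv Hc Huv.
  apply ln_lt_inv; [apply exp_pos | exact Hv |].
  rewrite ln_Rpower.
  apply Rmult_lt_reg_l with c; [exact Hc |].
  field_simplify; lra.
Qed.

Lemma lt_Rpower_inv u v c :
  0 < u -> 0 < v -> 0 < c -> c * ln v < ln u -> v < Rpower u (1 / c).
Proof.
  intros Hu Hv Hc Hvu.
  apply ln_lt_inv; [exact Hv | apply exp_pos |].
  rewrite ln_Rpower.
  apply Rmult_lt_reg_l with c; [exact Hc |].
  field_simplify; lra.
Qed.

Section LnSubScalLn.

Variables (a : R) (G g h : R -> R).
Hypothesis HG : forall x, a < x -> derivable_pt_lim G x (g x).
Hypothesis Hg : forall x, a < x -> derivable_pt_lim g x (h x).
Hypothesis HGpos : forall x, a < x -> 0 < G x.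
Hypothesis Hgpos : forall x, a < x -> 0 < g x.
Hypothesis Hhpos : forall x, a < x -> 0 < h x.

Lemma ln_sub_scal_ln_MVT c s t : a < s -> s < t ->
  exists x, a < x /\ (ln (G t) - c * ln (g t)) - (ln (G s) - c * ln (g s)) =
    h x / g x * (g x ^ 2 / (G x * h x) - c) * (t - s).
Proof.
  intros Has Hst.
  destruct (MVT_cor2 (fun t => ln (G t) - c * ln (g t))
              (fun x => / G x * g x - c * (/ g x * h x)) s t Hst) as [x [E Hx]].
  - intros x Hx.
    apply derivable_pt_lim_minus with (f1 := comp ln G)
      (f2 := mult_real_fct c (comp ln g)).
    + apply derivable_pt_lim_comp; [apply HG; lra |].
      apply derivable_pt_lim_ln, HGpos; lra.
    + apply derivable_pt_lim_scal, derivable_pt_lim_comp; [apply Hg; lra |].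
      apply derivable_pt_lim_ln, Hgpos; lra.
  - exists x. split; [lra |]. rewrite E.
    assert (0 < G x) by (apply HGpos; lra).
    assert (0 < g x) by (apply Hgpos; lra).
    assert (0 < h x) by (apply Hhpos; lra).
    f_equal. field. lra.
Qed.

Lemma ln_sub_scal_ln_decreasing c :
  (forall x, a < x -> g x ^ 2 / (G x * h x) < c) ->
  forall s t, a < s -> s < t ->
  ln (G t) - c * ln (g t) < ln (G s) - c * ln (g s).
Proof.
  intros Hratio s t Has Hst.
  destruct (ln_sub_scal_ln_MVT c s t Has Hst) as [x [Hax E]].
  specialize (Hratio x Hax).
  assert (0 < h x / g x) by (apply Rdiv_lt_0_compat; auto).
  assert (0 < h x / g x * (c - g x ^ 2 / (G x * h x)) * (t - s))
    by (apply Rmult_lt_0_compat; [apply Rmult_lt_0_compat |]; auto; lra).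
  lra.
Qed.

Lemma ln_sub_scal_ln_increasing c :
  (forall x, a < x -> c < g x ^ 2 / (G x * h x)) ->
  forall s t, a < s -> s < t ->
  ln (G s) - c * ln (g s) < ln (G t) - c * ln (g t).
Proof.
  intros Hratio s t Has Hst.
  destruct (ln_sub_scal_ln_MVT c s t Has Hst) as [x [Hax E]].
  specialize (Hratio x Hax).
  assert (0 < h x / g x) by (apply Rdiv_lt_0_compat; auto).
  assert (0 < h x / g x * (g x ^ 2 / (G x * h x) - c) * (t - s))
    by (apply Rmult_lt_0_compat; [apply Rmult_lt_0_compat |]; auto; lra).
  lra.
Qed.

End LnSubScalLn.

Theorem lemma2p7
  (f f1 f2 : R -> R) (t0 : R) (g1 g2 : R -> R) (q : R) (p : Rbar)
  (Ht0 : 0 <= t0)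
  (* f : [0,oo) -> [0,oo), continuously differentiable on [0,oo) *)
  (Hfnn : forall t, 0 <= t -> 0 <= f t)
  (Hf1 : deriv_on_from 0 f f1) (Hf1c : cont_on_from 0 f1)
  (* f > 0 on [t0,oo) and f in C^2([t0,oo)) *)
  (Hfpos : forall t, t0 <= t -> 0 < f t)
  (Hf2 : deriv_on_from t0 f1 f2) (Hf2c : cont_on_from t0 f2)
  (* g = log f on [t0,oo), with g' = g1 and g'' = g2 there *)
  (Hg1 : deriv_on_from t0 (fun t => ln (f t)) g1)
  (Hg2 : deriv_on_from t0 g1 g2)
  (* (H1)(i) *)
  (Hg1pos : forall t, t0 <= t -> 0 < g1 t)
  (Hg2pos : forall t, t0 <= t -> 0 < g2 t)
  (Hqp : (q = 1 /\ Rbar_lt (Finite 0) p) \/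
         (1 < q /\ Rbar_lt (Finite 0) p /\ Rbar_lt p p_infty))
  (Hlimq : is_lim (fun t => (g1 t) ^ 2 / (ln (f t) * g2 t)) p_infty (Finite q))
  (Hlimp : is_lim (fun t => t * g1 t / ln (f t)) p_infty p)
  (* (H1)(ii) *)
  (Hii : q = 1 ->
     (forall s t, t0 <= s -> s <= t ->
        s * g1 s / ln (f s) <= t * g1 t / ln (f t)) /\
     exists (k : nat) (gh gh1 gh2 : R -> R),
       (1 <= k)%nat /\
       deriv_on_from t0 gh gh1 /\ deriv_on_from t0 gh1 gh2 /\
       cont_on_from t0 gh2 /\
       (forall t, t0 <= t -> f t = exp_k k (gh t)) /\
       (forall s t, t0 <= s -> s <= t -> gh1 t / gh t <= gh1 s / gh s)) :
  forall eps, 0 < eps < q ->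
    exists te, t0 <= te /\
      forall s t, te <= s -> s < t ->
        Rpower (ln (f t) / ln (f s)) (1 / (q + eps)) <= g1 t / g1 s /\
        g1 t / g1 s <= Rpower (ln (f t) / ln (f s)) (1 / (q - eps)).
Proof.
  intros eps [Heps Hepsq].
  destruct (Hlimq (fun z => Rabs (z - q) < eps)) as [M HM].
  { exists (mkposreal eps Heps). now intros z Hz. }
  set (a := Rmax t0 M).
  assert (Ht0a : t0 <= a) by apply Rmax_l.
  assert (HMa : M <= a) by apply Rmax_r.
  assert (Hratio : forall x, a < x ->
            q - eps < g1 x ^ 2 / (ln (f x) * g2 x) < q + eps).
  { intros x Hx. specialize (HM x ltac:(lra)). apply Rabs_def2 in HM. lra. }
  assert (Hg1a : forall x, a < x -> 0 < g1 x) by (intros; apply Hg1pos; lra).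
  assert (Hg2a : forall x, a < x -> 0 < g2 x) by (intros; apply Hg2pos; lra).
  assert (HGa : forall x, a < x -> 0 < ln (f x)).
  { intros x Hx.
    assert (0 < ln (f x) * g2 x).
    { apply Rdiv_pos_denom_pos with (g1 x ^ 2); [apply pow_lt; auto |].
      specialize (Hratio x Hx). lra. }
    specialize (Hg2a x Hx). nra. }
  assert (HdG : forall x, a < x -> derivable_pt_lim (fun t => ln (f t)) x (g1 x))
    by (intros; apply derivable_pt_lim_of_deriv_on_from with t0; [exact Hg1 | lra]).
  assert (Hdg1 : forall x, a < x -> derivable_pt_lim g1 x (g2 x))
    by (intros; apply derivable_pt_lim_of_deriv_on_from with t0; [exact Hg2 | lra]).
  exists (a + 1). split; [lra |].
  intros s t Hs Hst.
  assert (Has : a < s) by lra.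
  assert (Hdecr := ln_sub_scal_ln_decreasing a _ _ _ HdG Hdg1 HGa Hg1a Hg2a
                     (q + eps) ltac:(intros x Hx; apply Hratio, Hx) s t Has Hst).
  assert (Hincr := ln_sub_scal_ln_increasing a _ _ _ HdG Hdg1 HGa Hg1a Hg2a
                     (q - eps) ltac:(intros x Hx; apply Hratio, Hx) s t Has Hst).
  assert (0 < ln (f s)) by auto. assert (0 < ln (f t)) by (apply HGa; lra).
  assert (0 < g1 s) by auto. assert (0 < g1 t) by (apply Hg1a; lra).
  split; apply Rlt_le;
    [apply Rpower_inv_lt | apply lt_Rpower_inv];
    try apply Rdiv_lt_0_compat; try lra;
    rewrite !ln_div by assumption; lra.
Qed.
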